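(* Let $A$ be a commutative ring with identity and $G$ a subgroup of the group $A^\times$ of units of $A$. Then the hypergroup $(A/G,\oplus)$ is realizable.
   Context: $G$ induces the equivalence relation $a\sim b\iff a=gb$ for some $g\in G$ on $A$; $A/G=\{[a]:a\in A\}$ is the set of classes, with hyperaddition $[a]\oplus[b]=\{[c]: c=g_1a+g_2b \text{ for some } g_1,g_2\in G\}$. A hypergroup is a nonempty set with a hyperoperation into nonempty subsets that is associative, has a unique identity $e$, unique inverses $h^{-1}$ with $e\in(h^{-1}*h)\cap(h*h^{-1})$, and is reversible ($c\in a*b\Rightarrow a\in c*b^{-1},\ b\in a^{-1}*c$). For a nonempty set $X$: $1_X$ is the diagonal, $p^*=\{(a,b):(b,a)\in p\}$, $xp=\{y:(x,y)\in p\}$. An association scheme on $X$ is a partition $S$ of $X\times X$ with $1_X\in S$, closed under $p\mapsto p^*$, such that for all $p,q,r\in S$ there is a cardinal $a_{pq}^r$ with $|yp\cap zq^*|=a_{pq}^r$ for all $y\in X$, $z\in yr$. $\mathbf{H}(S)$ is the hypergroup on $S$ with $p*q=\{r: a_{pq}^r\ge1\}$, identity $1_X$, inverse $p^*$. A hypergroup is realizable if it is isomorphic to $\mathbf{H}(S)$ for some association scheme $S$. *)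

From mathcomp Require Import all_boot all_algebra.
Set Implicit Arguments. Unset Strict Implicit. Unset Printing Implicit Defensive.
Import GRing.Theory.
Local Open Scope ring_scope.

Definition unit_subgroup (A : comPzRingType) (G : A -> Prop) : Prop :=
  [/\ G 1,
      (forall g, G g -> exists v, g * v = 1),
      (forall g h, G g -> G h -> G (g * h)) &
      (forall g, G g -> exists h, G h /\ g * h = 1)].

Definition cls (A : comPzRingType) (G : A -> Prop) (a : A) : A -> Prop :=
  fun b => exists g, G g /\ b = g * a.

Definition quot (A : comPzRingType) (G : A -> Prop) : Type :=
  {C : A -> Prop | exists a, C = cls G a}.

Definition quot_hop (A : comPzRingType) (G : A -> Prop) (C D E : quot G) : Prop :=
  exists a b c g1 g2, [/\ sval C = cls G a, sval D = cls G b, sval E = cls G c,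
    G g1 /\ G g2 & c = g1 * a + g2 * b].

Definition equipotent (X : Type) (P Q : X -> Prop) : Prop :=
  exists f : {x | P x} -> {x | Q x}, bijective f.

(* An association scheme on X, presented as a family of relations (rel i)
   indexed by a type I of labels, whose members are the classes of S. *)
Record assoc_scheme (X I : Type) (rel : I -> X -> X -> Prop) : Prop := {
  as_nonempty : forall i, exists x y, rel i x y;
  as_cover : forall x y, exists i, rel i x y;
  as_disjoint : forall i j x y, rel i x y -> rel j x y -> i = j;
  as_diag : exists i0, forall x y, rel i0 x y <-> x = y;
  as_transp : forall i, exists j, forall x y, rel j x y <-> rel i y x;
  (* |yp ∩ zq*| is the same cardinal a_pq^r for all (y,z) in r;
     note zq* = {x | (x,z) in q} *)
  as_regular : forall p q r y z y' z', rel r y z -> rel r y' z' ->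
    equipotent (fun x => rel p y x /\ rel q x z)
               (fun x => rel p y' x /\ rel q x z')
}.

(* r \in p * q in H(S), i.e. a_pq^r >= 1 *)
Definition scheme_hop (X I : Type) (rel : I -> X -> X -> Prop) (p q r : I) : Prop :=
  exists y z x, [/\ rel r y z, rel p y x & rel q x z].

(* a hypergroup (H, hop) (hop a b c <-> c \in a * b) is realizable *)
Definition realizable (H : Type) (hop : H -> H -> H -> Prop) : Prop :=
  exists (X I : Type) (rel : I -> X -> X -> Prop),
    assoc_scheme rel /\
    exists phi : H -> I, bijective phi /\
      forall a b c, hop a b c <-> scheme_hop rel (phi a) (phi b) (phi c).

From mathcomp Require Import all_boot all_algebra.
From mathcomp Require Import ring.
From Stdlib Require Import ProofIrrelevance FunctionalExtensionality PropExtensionality.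
Import GRing.Theory.
Local Open Scope ring_scope.
Set Implicit Arguments.

(* Take X = A and let the pair (x, y) lie in the relation indexed by the class
   [c] when y - x lies in [c]. For two pairs (y, z), (y', z') of the same class
   [c] we have z' - y' = k (z - y) with k in G, and the affine bijection
   x |-> y' + k (x - y) sends y, z to y', z' while preserving every relation,
   so the intersection numbers do not depend on the chosen pair. The composed
   relations of H(S) are exactly the classes of sums g1 a + g2 b. *)

Lemma equipotent_cancel {X : Type} {P Q : X -> Prop} {f g : X -> X} :
    cancel f g -> cancel g f ->
    (forall x, P x -> Q (f x)) -> (forall x, Q x -> P (g x)) ->
  equipotent P Q.
Proof.
move=> fK gK PQ QP.
exists (fun u => exist Q (f (sval u)) (PQ _ (svalP u))).
exists (fun u => exist P (g (sval u)) (QP _ (svalP u))).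
- by move=> [x Px]; apply: eq_sig_hprop => [? ? ?|]; [apply: proof_irrelevance|exact: fK].
- by move=> [x Qx]; apply: eq_sig_hprop => [? ? ?|]; [apply: proof_irrelevance|exact: gK].
Qed.

Section UnitSubgroupClasses.
Variables (A : comPzRingType) (G : A -> Prop).
Hypothesis HG : unit_subgroup G.

Lemma unit_subgroup1 : G 1.
Proof. by case: HG. Qed.

Lemma unit_subgroupM g h : G g -> G h -> G (g * h).
Proof. by case: HG => _ _ GM _; apply: GM. Qed.

Lemma unit_subgroupV g : G g -> exists2 h, G h & h * g = 1.
Proof. by case: HG => _ _ _ GV /GV [h [Gh gh]]; exists h; rewrite // mulrC. Qed.

Lemma cls_refl a : cls G a a.
Proof. by exists 1; rewrite mul1r; split; first exact: unit_subgroup1. Qed.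

Lemma cls_trans a b c : cls G a b -> cls G b c -> cls G a c.
Proof.
move=> [g [Gg ->]] [h [Gh ->]].
by exists (h * g); rewrite mulrA; split; first exact: unit_subgroupM.
Qed.

Lemma cls_sym a b : cls G a b -> cls G b a.
Proof.
move=> [g [/unit_subgroupV [h Gh hg] ->]].
by exists h; rewrite mulrA hg mul1r.
Qed.

Lemma cls_mul k a : G k -> cls G a (k * a).
Proof. by move=> Gk; exists k. Qed.

Lemma cls_opp a b : cls G a b -> cls G (- a) (- b).
Proof. by move=> [g [Gg ->]]; exists g; rewrite mulrN. Qed.

Lemma cls_eq a b : cls G a b -> cls G a = cls G b.
Proof.
move=> ab; apply: functional_extensionality => t.
apply: propositional_extensionality; split; last exact: cls_trans.
exact/cls_trans/cls_sym.
Qed.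

Lemma quot_memE (C : quot G) t : sval C t -> sval C = cls G t.
Proof. by case: C => C [a E] /=; rewrite E; apply: cls_eq. Qed.

Lemma quot_memM (C : quot G) k t : G k -> sval C t -> sval C (k * t).
Proof. by move=> Gk /quot_memE ->; apply: cls_mul. Qed.

Lemma quot_eq (C D : quot G) : sval C = sval D -> C = D.
Proof. by move=> CD; apply: eq_sig_hprop => // ? ? ?; apply: proof_irrelevance. Qed.

Definition class_of (a : A) : quot G := exist _ (cls G a) (ex_intro _ a erefl).

Definition diff_rel (C : quot G) (x y : A) : Prop := sval C (y - x).

Lemma diff_rel_affine (C : quot G) k c d x y : G k ->
  diff_rel C x y -> diff_rel C (d + k * (x - c)) (d + k * (y - c)).
Proof.
rewrite /diff_rel => Gk; have -> : d + k * (y - c) - (d + k * (x - c)) = k * (y - x).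
  by ring.
exact: quot_memM.
Qed.

Lemma diff_rel_regular p q r y z y' z' : diff_rel r y z -> diff_rel r y' z' ->
  equipotent (fun x => diff_rel p y x /\ diff_rel q x z)
             (fun x => diff_rel p y' x /\ diff_rel q x z').
Proof.
rewrite {2}/diff_rel => /quot_memE -> [k [Gk Ek]].
have [ki Gki kik] := unit_subgroupV Gk.
pose f x := y' + k * (x - y); pose g x := y + ki * (x - y').
have fK : cancel f g.
  move=> x; rewrite /f /g.
  have -> : y + ki * (y' + k * (x - y) - y') = y + ki * k * (x - y) by ring.
  by rewrite kik mul1r addrC subrK.
have gK : cancel g f.
  move=> x; rewrite /f /g.
  have -> : y' + k * (y + ki * (x - y') - y) = y' + ki * k * (x - y') by ring.
  by rewrite kik mul1r addrC subrK.
have fy : f y = y' by rewrite /f subrr mulr0 addr0.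
have fz : f z = z' by rewrite /f -Ek addrC subrK.
have gy : g y' = y by rewrite -fy fK.
have gz : g z' = z by rewrite -fz fK.
apply: (equipotent_cancel fK gK) => x [pyx qxz].
- by rewrite -{1}fy -fz; split; apply: diff_rel_affine.
- by rewrite -{1}gy -gz; split; apply: diff_rel_affine.
Qed.

Lemma diff_rel_scheme : assoc_scheme diff_rel.
Proof.
split.
- by move=> [C [a E]]; exists 0, a; rewrite /diff_rel /= E subr0; apply: cls_refl.
- by move=> x y; exists (class_of (y - x)); apply: cls_refl.
- by move=> i j x y /quot_memE Ei /quot_memE Ej; apply: quot_eq; rewrite Ei Ej.
- exists (class_of 0) => x y; rewrite /diff_rel /=; split.
  + by move=> [g [_]]; rewrite mulr0 => /eqP; rewrite subr_eq0 => /eqP.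
  + by move=> ->; rewrite subrr; apply: cls_refl.
- move=> [C [a E]]; exists (class_of (- a)) => x y; rewrite /diff_rel /= E.
  split=> [/cls_opp | /cls_opp]; rewrite ?opprK opprB //.
- exact: diff_rel_regular.
Qed.

Lemma quot_hop_diff_rel C D E :
  quot_hop C D E <-> scheme_hop diff_rel C D E.
Proof.
split.
- move=> [a [b [c [g1 [g2 [EC ED EE [Gg1 Gg2] Ec]]]]]].
  exists 0, (g1 * a + g2 * b), (g1 * a).
  rewrite /diff_rel EC ED EE !subr0 Ec (addrC (g1 * a)) addrK.
  by split; [apply: cls_refl | apply: cls_mul..].
- move=> [y [z [x [/quot_memE EE /quot_memE EC /quot_memE ED]]]].
  exists (x - y), (z - x), (z - y), 1, 1; split=> //; last by ring.
  by split; apply: unit_subgroup1.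
Qed.

End UnitSubgroupClasses.

Theorem proposition5p14 (A : comPzRingType) (G : A -> Prop) :
  unit_subgroup G -> realizable (@quot_hop A G).
Proof.
move=> HG; exists A, (quot G), (@diff_rel A G).
split; first exact: diff_rel_scheme.
exists id; split; first by exists id.
exact: quot_hop_diff_rel.
Qed.
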